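(* Let $k\geq 1$, $m\neq 0$, and $K=J(2k+1,2m)$ with the knot group presentation $\langle a,b\mid w^m a=bw^m\rangle$, $w=(ba^{-1})^k ba(b^{-1}a)^k$. Let $\phi_K(x,y)$ be the Riley polynomial for this presentation, and put $\lambda=\lambda_k(x,y)=x^2-y-(y-2)(y+2-x^2)S_k(y)S_{k-1}(y)$ and $\alpha=\alpha_k(x,y)=1+(y+2-x^2)S_{k-1}(y)\big(S_k(y)-S_{k-1}(y)\big)$. Then if $m\geq 1$, $\phi_K(x,y)=S_{m-1}(\lambda)\,\alpha-S_{m-2}(\lambda)$; if $m\leq -1$, $\phi_K(x,y)=S_{|m|}(\lambda)-S_{|m|-1}(\lambda)\,\alpha$.
   Context: Chebyshev polynomials: $S_0(z)=1$, $S_1(z)=z$, $S_{n+1}(z)=zS_n(z)-S_{n-1}(z)$, with the convention $S_{-1}=0$. $J(2k+1,2m)$ is the double twist knot (two-bridge knot with twist regions of $2k+1$ and $2m$ signed half-twists) whose group has the stated presentation with $a,b$ meridians. Riley polynomial: for a presentation $\langle a,b\mid va=bv\rangle$ with $a,b$ meridians, set $A=\begin{bmatrix}s&1\\0&s^{-1}\end{bmatrix}$, $B=\begin{bmatrix}s&0\\2-y&s^{-1}\end{bmatrix}$, $V$ = $v$ evaluated at $A,B$; the $(1,2)$-entry of $VA-BV$ equals $f(s+s^{-1},y)$ for a polynomial $f\in\mathbb{Z}[x,y]$, and $\phi_K(x,y):=f(x,y)$ (here $v=w^m$). *)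

From HB Require Import structures.
From mathcomp Require Import all_boot all_order all_algebra.
Set Implicit Arguments. Unset Strict Implicit. Unset Printing Implicit Defensive.
Import Order.TTheory GRing.Theory Num.Theory.
Local Open Scope ring_scope.

(* cheb_ n z = S_{n-1}(z):  cheb_ 0 = S_{-1} = 0, cheb_ 1 = S_0 = 1,
   cheb_ (n+2) = z * cheb_ (n+1) - cheb_ n. *)
Fixpoint cheb_ {R : pzRingType} (n : nat) (z : R) : R :=
  match n with
  | 0%N => 0
  | 1%N => 1
  | (n'.+1 as n1).+1 => z * cheb_ n1 z - cheb_ n' z
  end.

(* Chebyshev polynomial S_n for an integer index n, extended by the recursion
   S_{n+1} = z S_n - S_{n-1} to all n (so S_{-1} = 0, S_{-n} = - S_{n-2}). *)
Definition cheb {R : pzRingType} (n : int) (z : R) : R :=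
  match n with
  | Posz n => cheb_ n.+1 z
  | Negz n => - cheb_ n z
  end.

Definition mx2 {R : pzRingType} (a b c d : R) : 'M[R]_2 :=
  \matrix_(i < 2, j < 2)
    if (i : nat) == 0%N then (if (j : nat) == 0%N then a else b)
    else (if (j : nat) == 0%N then c else d).

Section Riley.
Variable R : comUnitRingType.

Definition rileyA (s : R) : 'M[R]_2 := mx2 s 1 0 s^-1.
Definition rileyB (s y : R) : 'M[R]_2 := mx2 s 0 (2 - y) s^-1.

Definition rileyW (k : nat) (s y : R) : 'M[R]_2 :=
  let A := rileyA s in let B := rileyB s y in
  ((B * A^-1) ^+ k) * B * A * ((B^-1 * A) ^+ k).

(* The (1,2)-entry of V A - B V with V = w^m ; by definition of the Riley
   polynomial this equals phi_K(s + s^{-1}, y). *)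
Definition riley_entry (k : nat) (m : int) (s y : R) : R :=
  let A := rileyA s in let B := rileyB s y in
  let V := rileyW k s y ^ m in
  (V * A - B * V) ord0 ord_max.

Definition lambdak (k : nat) (x y : R) : R :=
  x ^+ 2 - y - (y - 2) * (y + 2 - x ^+ 2) * cheb k y * cheb (k%:Z - 1) y.

Definition alphak (k : nat) (x y : R) : R :=
  1 + (y + 2 - x ^+ 2) * cheb (k%:Z - 1) y * (cheb k y - cheb (k%:Z - 1) y).

End Riley.

(* Cayley-Hamilton gives M^2 = (tr M) M - 1 for every 2x2 matrix of determinant 1,
   so M^m = S_{m-1}(tr M) M - S_{m-2}(tr M) for every integer m.  The (1,2)-entry
   of V A - B V is affine in V and equals 1 at V = 1, so for V = W^m, W = w(A,B),
   it is S_{m-1}(lambda) alpha - S_{m-2}(lambda) with lambda = tr W and alpha the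
   (1,2)-entry of W A - B W.  Writing (B A^-1)^k and (B^-1 A)^k in the same way
   (both factors have trace y), lambda and alpha become polynomial identities in
   s, s^-1, y, S_{k-1}(y), S_{k-2}(y) modulo s s^-1 = 1 and the Cassini identity
   S_{k-1}^2 - y S_{k-1} S_{k-2} + S_{k-2}^2 = 1.  For m < 0 one uses S_{-n} = -S_{n-2}. *)

From HB Require Import structures.
From mathcomp Require Import all_boot all_order all_algebra.
From mathcomp Require Import ring zify.
Set Implicit Arguments.
Unset Strict Implicit.
Unset Printing Implicit Defensive.
Import Order.TTheory GRing.Theory Num.Theory.
Local Open Scope ring_scope.

Section Chebyshev.
Variable R : pzRingType.
Implicit Types (z : R) (n : int).

Lemma cheb_subn1 (n : nat) z : cheb (n%:Z - 1) z = cheb_ n z.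
Proof. by case: n => [|n]; [exact: oppr0 | rewrite -[in LHS]addn1 PoszD addrK]. Qed.

Lemma chebD1 n z : cheb (n + 1) z = z * cheb n z - cheb (n - 1) z.
Proof.
case: n => n.
- by rewrite cheb_subn1 -PoszD addn1.
- have -> : Negz n - 1 = Negz n.+1 by rewrite !NegzE; lia.
  case: n => [|n]; first by rewrite /= oppr0 mulr0 sub0r opprK.
  have -> : Negz n.+1 + 1 = Negz n by rewrite !NegzE; lia.
  have -> : cheb (Negz n.+2) z = - (z * cheb_ n.+1 z - cheb_ n z) by [].
  by rewrite /cheb mulrN opprK addKr.
Qed.

Lemma chebB1 n z : cheb n z = z * cheb (n - 1) z - cheb (n - 2) z.
Proof. by rewrite -[in LHS](subrK 1 n) chebD1 -addrA. Qed.

Lemma chebN n z : cheb (- n) z = - cheb (n - 2) z.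
Proof.
case: n => [[|n]|n].
- by rewrite /= opprK.
- have -> : Posz n.+1 - 2 = n%:Z - 1 by lia.
  by rewrite cheb_subn1.
- have -> : Negz n - 2 = Negz n.+2 by rewrite !NegzE; lia.
  by rewrite /= opprK.
Qed.
End Chebyshev.

Lemma cheb_cassini (R : comPzRingType) (n : int) (z : R) :
  cheb n z ^+ 2 - z * cheb n z * cheb (n - 1) z + cheb (n - 1) z ^+ 2 = 1.
Proof.
pose C i := cheb i z ^+ 2 - z * cheb i z * cheb (i - 1) z + cheb (i - 1) z ^+ 2.
have CD1 i : C (i + 1) = C i by rewrite /C chebD1 addrK; ring.
rewrite -/(C n); elim/int_ind: n => [|n IH|n IH].
- by rewrite /C /= oppr0; ring.
- by rewrite -[n.+1]addn1 PoszD CD1.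
- by rewrite -IH -CD1; congr C; lia.
Qed.

Section QuadraticPowers.
Variables (R : comPzRingType) (A : unitAlgType R) (t : R) (M : A).
Hypothesis M2 : M * M = t *: M - 1.

Lemma quad_mulrV : M * (t%:A - M) = 1.
Proof. by rewrite mulrBr M2 -scalerAr mulr1 opprB addrC subrK. Qed.

Lemma quad_mulVr : (t%:A - M) * M = 1.
Proof. by rewrite mulrBl M2 -scalerAl mul1r opprB addrC subrK. Qed.

Lemma quad_unit : M \is a GRing.unit.
Proof. by apply/unitrP; exists (t%:A - M); rewrite quad_mulrV quad_mulVr. Qed.

Lemma quad_inv : M^-1 = t%:A - M.
Proof. by apply: (mulrI quad_unit); rewrite (mulrV quad_unit) quad_mulrV. Qed.

Lemma exprz_quad (m : int) : M ^ m = cheb (m - 1) t *: M - (cheb (m - 2) t)%:A.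
Proof.
pose F i := cheb (i - 1) t *: M - (cheb (i - 2) t)%:A.
have FD1 i : F (i + 1) = F i * M.
  rewrite /F mulrBl -scalerAl M2 -scalerAl mul1r addrK.
  have -> : i + 1 - 2 = i - 1 by lia.
  by rewrite [cheb i t]chebB1 scalerBr scalerA scalerBl mulrC addrAC.
rewrite -/(F m); elim/int_ind: m => [|n IH|n IH].
- by rewrite expr0z /F /= oppr0 scale0r sub0r scaleN1r opprK.
- by rewrite -exprnP exprSr exprnP IH -FD1 -PoszD addn1.
- rewrite -exprz_inv exprSzr exprz_inv IH.
  have -> : - n%:Z = - n.+1%:Z + 1 by lia.
  by rewrite FD1 (mulrK quad_unit).
Qed.
End QuadraticPowers.

Section Mx2.
Variable R : comNzRingType.
Implicit Types (a b c d e : R) (M : 'M[R]_2).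

Lemma mx2_eta M : M = mx2 (M 0 0) (M 0 1) (M 1 0) (M 1 1).
Proof.
apply/matrixP => -[[|[|i]] Hi] [[|[|j]] Hj] //; rewrite !mxE /=;
  by congr (M _ _); apply/val_inj.
Qed.

Lemma mx2_12 a b c d : mx2 a b c d ord0 ord_max = b.
Proof. by rewrite mxE. Qed.

Lemma mx2_add a b c d a1 b1 c1 d1 :
  mx2 a b c d + mx2 a1 b1 c1 d1 = mx2 (a + a1) (b + b1) (c + c1) (d + d1).
Proof. by apply/matrixP => -[[|[|i]] Hi] [[|[|j]] Hj]; rewrite !mxE. Qed.

Lemma mx2_opp a b c d : - mx2 a b c d = mx2 (- a) (- b) (- c) (- d).
Proof. by apply/matrixP => -[[|[|i]] Hi] [[|[|j]] Hj]; rewrite !mxE. Qed.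

Lemma mx2_scale e a b c d : e *: mx2 a b c d = mx2 (e * a) (e * b) (e * c) (e * d).
Proof. by apply/matrixP => -[[|[|i]] Hi] [[|[|j]] Hj]; rewrite !mxE. Qed.

Lemma mx2_scalar e : e%:A = mx2 e 0 0 e :> 'M[R]_2.
Proof. by apply/matrixP => -[[|[|i]] Hi] [[|[|j]] Hj]; rewrite !mxE /= ?mulr1 ?mulr0. Qed.

Lemma mx2_mul a b c d a1 b1 c1 d1 :
  mx2 a b c d * mx2 a1 b1 c1 d1 =
  mx2 (a * a1 + b * c1) (a * b1 + b * d1) (c * a1 + d * c1) (c * b1 + d * d1).
Proof.
apply/matrixP => i j; rewrite -mulmxE !mxE !big_ord_recl big_ord0 !mxE addr0.
by case: i => -[|[|i]] Hi; case: j => -[|[|j]] Hj.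
Qed.

Lemma mxtrace_mx2 a b c d : \tr (mx2 a b c d) = a + d.
Proof. by rewrite /mxtrace !big_ord_recl big_ord0 !mxE addr0. Qed.

Lemma det_mx2 a b c d : \det (mx2 a b c d) = a * d - b * c.
Proof.
by rewrite (expand_det_row _ 0) !big_ord_recl big_ord0 /cofactor !det_mx11 !mxE /=; ring.
Qed.

Lemma mx2_Cayley_Hamilton M : M * M = \tr M *: M - (\det M)%:A.
Proof.
rewrite [in LHS](mx2_eta M) [in RHS](mx2_eta M).
move: (M 0 0) (M 0 1) (M 1 0) (M 1 1) => a b c d.
rewrite mx2_mul mxtrace_mx2 det_mx2 mx2_scale mx2_scalar mx2_opp mx2_add.
by congr mx2; ring.
Qed.

Lemma det_exprn M n : \det (M ^+ n) = \det M ^+ n.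
Proof. by elim: n => [|n IH]; rewrite ?det1 // !exprS detM IH. Qed.
End Mx2.

Section Mx2Det1.
Variable R : comUnitRingType.
Implicit Types (a b c d : R) (M : 'M[R]_2).

Lemma mx2_det1_quad M : \det M = 1 -> M * M = \tr M *: M - 1.
Proof. by move=> detM1; rewrite mx2_Cayley_Hamilton detM1 scale1r. Qed.

Lemma invmx2 a b c d : a * d - b * c = 1 -> (mx2 a b c d)^-1 = mx2 d (- b) (- c) a.
Proof.
move=> det1; rewrite (quad_inv (mx2_det1_quad _)) ?det_mx2 //.
by rewrite mxtrace_mx2 mx2_scalar mx2_opp mx2_add; congr mx2; ring.
Qed.

Lemma exprz_det1 M (m : int) : \det M = 1 ->
  M ^ m = cheb (m - 1) (\tr M) *: M - (cheb (m - 2) (\tr M))%:A.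
Proof. by move=> detM1; apply/exprz_quad/mx2_det1_quad. Qed.
End Mx2Det1.

Section RileyMatrices.
Variables (R : comUnitRingType) (s y : R).
Hypothesis s_unit : s \is a GRing.unit.

Let sV : s * s^-1 = 1 := mulrV s_unit.

Definition riley_defect (V : 'M[R]_2) : R :=
  (V * rileyA s - rileyB s y * V) ord0 ord_max.

Lemma riley_defect_affine a b V : riley_defect (a *: V - b%:A) = a * riley_defect V - b.
Proof.
rewrite /riley_defect (mx2_eta V) /rileyA /rileyB mx2_scale mx2_scalar.
by rewrite !(mx2_mul, mx2_opp, mx2_add) !mx2_12; ring.
Qed.

Lemma det_rileyA : \det (rileyA s) = 1.
Proof. by rewrite det_mx2 mulr0 subr0. Qed.

Lemma det_rileyB : \det (rileyB s y) = 1.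
Proof. by rewrite det_mx2 mul0r subr0. Qed.

Lemma rileyA_inv : (rileyA s)^-1 = mx2 s^-1 (- 1) (- 0) s.
Proof. by rewrite invmx2 // mulr0 subr0. Qed.

Lemma rileyB_inv : (rileyB s y)^-1 = mx2 s^-1 (- 0) (- (2 - y)) s.
Proof. by rewrite invmx2 // mul0r subr0. Qed.

Let P := rileyB s y * (rileyA s)^-1.
Let Q := (rileyB s y)^-1 * rileyA s.

Lemma det_P : \det P = 1.
Proof. by rewrite detM detV det_rileyA det_rileyB invr1 mulr1. Qed.

Lemma det_Q : \det Q = 1.
Proof. by rewrite detM detV det_rileyA det_rileyB invr1 mulr1. Qed.

Lemma mxtrace_P : \tr P = y.
Proof. by rewrite /P rileyA_inv mx2_mul mxtrace_mx2; ring: sV. Qed.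

Lemma mxtrace_Q : \tr Q = y.
Proof. by rewrite /Q rileyB_inv mx2_mul mxtrace_mx2; ring: sV. Qed.

Lemma rileyW_cheb k : rileyW k s y =
  (cheb (k%:Z - 1) y *: P - (cheb (k%:Z - 2) y)%:A) * rileyB s y * rileyA s *
  (cheb (k%:Z - 1) y *: Q - (cheb (k%:Z - 2) y)%:A).
Proof. by rewrite /rileyW !exprnP !exprz_det1 ?det_P ?det_Q // mxtrace_P mxtrace_Q. Qed.

Let cassini_k k : cheb (k%:Z - 1) y ^+ 2 =
  1 + y * cheb (k%:Z - 1) y * cheb (k%:Z - 2) y - cheb (k%:Z - 2) y ^+ 2.
Proof.
have := cheb_cassini (k%:Z - 1) y.
have -> : k%:Z - 1 - 1 = k%:Z - 2 by lia.
by move=> <-; ring.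
Qed.

Lemma det_rileyW k : \det (rileyW k s y) = 1.
Proof.
by rewrite !detM !det_exprn det_P det_Q det_rileyA det_rileyB !expr1n !mulr1.
Qed.

Lemma mxtrace_rileyW k : \tr (rileyW k s y) = lambdak k (s + s^-1) y.
Proof.
rewrite rileyW_cheb /lambdak [cheb k%:Z y]chebB1 /P /Q rileyA_inv rileyB_inv.
rewrite !(mx2_mul, mx2_scale, mx2_scalar, mx2_opp, mx2_add) mxtrace_mx2.
ring: sV (cassini_k k).
Qed.

Lemma riley_defect_rileyW k : riley_defect (rileyW k s y) = alphak k (s + s^-1) y.
Proof.
rewrite /riley_defect rileyW_cheb /alphak [cheb k%:Z y]chebB1 /P /Q.
rewrite rileyA_inv rileyB_inv.
rewrite !(mx2_mul, mx2_scale, mx2_scalar, mx2_opp, mx2_add) mx2_12.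
ring: sV (cassini_k k).
Qed.
End RileyMatrices.

Theorem proposition4p4 (R : comUnitRingType) (k : nat) (m : int)
  (s y : R) :
  (1 <= k)%N -> m != 0 -> s \is a GRing.unit ->
  let x := s + s^-1 in
  let lam := lambdak k x y in
  let alp := alphak k x y in
  (0 < m -> riley_entry k m s y = cheb (m - 1) lam * alp - cheb (m - 2) lam) /\
  (m < 0 -> riley_entry k m s y = cheb (- m) lam - cheb (- m - 1) lam * alp).
Proof.
(* The identity also holds for k = 0 and for m = 0. *)
move=> _ _ s_unit x lam alp.
have entry : riley_entry k m s y = cheb (m - 1) lam * alp - cheb (m - 2) lam.
  have -> : riley_entry k m s y = riley_defect s y (rileyW k s y ^ m) by [].
  rewrite exprz_det1 ?det_rileyW // mxtrace_rileyW //.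
  by rewrite riley_defect_affine riley_defect_rileyW.
split=> _; rewrite entry //.
rewrite -[m - 1]opprK -[m - 2]opprK (chebN (- (m - 1))) (chebN (- (m - 2))).
have -> : - (m - 1) - 2 = - m - 1 by lia.
have -> : - (m - 2) - 2 = - m by lia.
ring.
Qed.
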